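(* Let $\kappa$ be an algebraically closed field of characteristic zero, complete for a non-trivial non-Archimedean absolute value. Let $a,b\in\kappa$ with $a\ne0$ and $|a|\le1$, let $L(z)=az+b$, let $f\in\mathcal{A}(\kappa)$ be an entire function not identically zero, and let $m$ be a positive integer. Then for every $r>|b|/|a|$, $$m\!\left(r,\frac{f\circ L}{f}\right)=0,\qquad m\!\left(r,\frac{\Delta_L^mf}{f}\right)=0.$$
   Context: $\mathcal{A}(\kappa)$ is the ring of entire functions over $\kappa$ (power series converging on all of $\kappa$). For entire $g=\sum a_nz^n$, $\mu(r,g)=\max_n|a_n|r^n$; for $g/h$, $\mu(r,g/h)=\mu(r,g)/\mu(r,h)$; $m(r,F)=\log^+\mu(r,F)=\max\{0,\log\mu(r,F)\}$. $\Delta_Lf=f\circ L-f$ and $\Delta_L^mf=\Delta_L(\Delta_L^{m-1}f)$. *)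

From HB Require Import structures.
From mathcomp Require Import all_boot all_order all_algebra.
From mathcomp Require Import all_classical all_reals all_analysis.
Set Implicit Arguments. Unset Strict Implicit. Unset Printing Implicit Defensive.
Import Order.TTheory GRing.Theory Num.Theory.
Import numFieldNormedType.Exports.
Local Open Scope classical_set_scope.
Local Open Scope ring_scope.

Section NonArch.
Variables (R : realType) (K : fieldType) (v : K -> R).

Definition is_nonarch_abs : Prop :=
  [/\ forall x, 0 <= v x,
      forall x, v x = 0 <-> x = 0,
      forall x y, v (x * y) = v x * v y
    & forall x y, v (x + y) <= Num.max (v x) (v y)].

Definition nontrivial_abs : Prop := exists x, v x != 0 /\ v x != 1.

Definition Kcvg (u : nat -> K) (l : K) : Prop :=
  (fun n => v (u n - l)) @ \oo --> (0 : R).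

Definition Kcauchy (u : nat -> K) : Prop :=
  forall e : R, 0 < e -> exists N, forall m n, (N <= m)%N -> (N <= n)%N ->
    v (u m - u n) < e.

Definition complete_abs : Prop :=
  forall u : nat -> K, Kcauchy u -> exists l, Kcvg u l.

(* the limit of a sequence (0 if it does not converge) *)
Definition Klim (u : nat -> K) : K := xget 0 [set l | Kcvg u l].

Definition Ksum (t : nat -> K) : K := Klim (fun N => \sum_(i < N) t i).

(* A power series is represented by its coefficient sequence c : nat -> K.
   It is entire (converges on all of K) iff |c_n| r^n -> 0 for every r > 0. *)
Definition entire (c : nat -> K) : Prop :=
  forall r : R, 0 < r -> (fun n => v (c n) * r ^+ n) @ \oo --> (0 : R).

(* coefficients of g o L, L(z) = a z + b:
   (g o L)_k = sum_{n} g_n * C(n,k) a^k b^(n-k) *)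
Definition compL (a b : K) (g : nat -> K) : nat -> K :=
  fun k => Ksum (fun n => g n * ('C(n, k))%:R * a ^+ k * b ^+ (n - k)).

Definition DeltaL (a b : K) (g : nat -> K) : nat -> K :=
  fun k => compL a b g k - g k.

Definition DeltaLn (a b : K) (m : nat) (g : nat -> K) : nat -> K :=
  iter m (DeltaL a b) g.

Definition mu (r : R) (g : nat -> K) : R :=
  sup (range (fun n => v (g n) * r ^+ n)).

(* m(r, g/h) = log^+ (mu(r,g) / mu(r,h)) *)
Definition mlog (r : R) (g h : nat -> K) : R :=
  Num.max 0 (ln (mu r g / mu r h)).

End NonArch.

(** Over a non-Archimedean field every coefficient of [g o L] is a convergent
    sum of terms [g_n C(n,k) a^k b^(n-k)]; when [|a| <= 1] and [|b| <= r] the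
    weighted size [|.| r^k] of each such term is at most [|g_n| r^n], so the
    ultrametric inequality gives [mu(r, g o L) <= mu(r, g)], hence also
    [mu(r, Delta_L g) <= mu(r, g)] and, by iteration, the same for [Delta_L^m g].
    Thus both quotients have [mu <= 1] and [log^+] vanishes.  The hypothesis
    [r > |b|/|a|] is only used through its consequence [r >= |b|]. *)
From HB Require Import structures.
From mathcomp Require Import all_boot all_order all_algebra.
From mathcomp Require Import all_classical all_reals all_analysis.
From mathcomp Require Import lra.
Import Order.TTheory GRing.Theory Num.Theory.
Import numFieldNormedType.Exports.
Local Open Scope classical_set_scope.
Local Open Scope ring_scope.

Section NonArchimedeanAbs.
Context {R : realType} {K : fieldType} {v : K -> R}.
Hypothesis hv : is_nonarch_abs v.

Lemma absv_ge0 x : 0 <= v x. Proof. by case: hv. Qed.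

Lemma absv_eq0 x : (v x == 0) = (x == 0).
Proof. by case: hv => _ h _ _; apply/eqP/eqP => /h. Qed.

Lemma absv_gt0 x : (0 < v x) = (x != 0).
Proof. by rewrite lt_def absv_eq0 absv_ge0 andbT. Qed.

Lemma absv0 : v 0 = 0. Proof. by apply/eqP; rewrite absv_eq0. Qed.

Lemma absvM x y : v (x * y) = v x * v y. Proof. by case: hv. Qed.

Lemma absvD_le_max x y : v (x + y) <= Num.max (v x) (v y). Proof. by case: hv. Qed.

Lemma absv1 : v 1 = 1.
Proof.
apply: (@mulfI _ (v 1)); first by rewrite absv_eq0 oner_eq0.
by rewrite -absvM !mulr1.
Qed.

Lemma absvN x : v (- x) = v x.
Proof.
have vN1 : v (-1) = 1.
  have e : v (-1) * v (-1) = 1 by rewrite -absvM mulrNN mulr1 absv1.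
  have := absv_ge0 (-1); nra.
by rewrite -mulN1r absvM vN1 mul1r.
Qed.

Lemma absvX x n : v (x ^+ n) = v x ^+ n.
Proof. by elim: n => [|n IH]; rewrite ?(expr0, absv1) // !exprS absvM IH. Qed.

Lemma absv_natr_le1 n : v n%:R <= 1.
Proof.
elim: n => [|n IH]; first by rewrite absv0.
rewrite -addn1 natrD; apply: le_trans (absvD_le_max _ _) _.
by rewrite ge_max IH absv1 lexx.
Qed.

Lemma absv_sum_le (t : nat -> K) B : 0 <= B -> (forall i, v (t i) <= B) ->
  forall N, v (\sum_(i < N) t i) <= B.
Proof.
move=> B0 tB; elim=> [|N IH]; first by rewrite big_ord0 absv0.
rewrite big_ord_recr; apply: le_trans (absvD_le_max _ _) _.
by rewrite ge_max IH tB.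
Qed.

(* A limit cannot escape a closed ultrametric ball; [Klim] is [0] when there is
   no limit, which is also in the ball. *)
Lemma absv_Klim_le (u : nat -> K) B : 0 <= B -> (forall N, v (u N) <= B) ->
  v (Klim v u) <= B.
Proof.
move=> B0 uB; rewrite /Klim.
case: (pselect (exists l, Kcvg v u l)) => [ex|nex]; last first.
  by rewrite xgetPN ?absv0 // => l ul; apply: nex; exists l.
move: (xgetPex 0 ex); move: (xget _ _) => l ul.
rewrite leNgt; apply/negP => Bl.
have gap : 0 < v l - B by rewrite subr_gt0.
have [n close] := filter_ex (@cvgr_lt R nat \oo _ _ 0 ul _ gap).
have := absvD_le_max (l - u n) (u n); rewrite subrK le_max -(absvN (l - u n)) opprB.
move=> /orP[]; have := uB n; have := close; lra.
Qed.

Lemma absv_Ksum_le (t : nat -> K) B : 0 <= B -> (forall i, v (t i) <= B) ->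
  v (Ksum v t) <= B.
Proof. by move=> B0 tB; apply: absv_Klim_le => //; apply: absv_sum_le. Qed.

Section ShiftedCoefficients.
Context {a b : K} {r : R}.
Hypotheses (va_le1 : v a <= 1) (vb_le_r : v b <= r) (r_gt0 : 0 < r).

Lemma compL_term_weight_le (g : nat -> K) n k :
  v (g n * 'C(n, k)%:R * a ^+ k * b ^+ (n - k)) * r ^+ k <= v (g n) * r ^+ n.
Proof.
have [kn|nk] := leqP k n; last first.
  by rewrite bin_small // !(mulr0, mul0r) absv0 mul0r mulr_ge0 ?absv_ge0 ?exprn_ge0 ?ltW.
have rn : r ^+ n = r ^+ (n - k) * r ^+ k by rewrite -exprD subnK.
rewrite !absvM !absvX rn -!mulrA; apply: ler_wpM2l; first exact: absv_ge0.
rewrite !mulrA ler_pM2r ?exprn_gt0 // -[r ^+ (n - k)]mul1r.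
apply: ler_pM; rewrite ?mulr_ge0 ?exprn_ge0 ?absv_ge0 //.
  by apply: mulr_ile1; rewrite ?exprn_ile1 ?exprn_ge0 ?absv_natr_le1 ?absv_ge0.
by apply: lerXn2r; rewrite ?nnegrE ?absv_ge0 // ltW.
Qed.

Lemma compL_weight_le (g : nat -> K) M : (forall n, v (g n) * r ^+ n <= M) ->
  forall k, v (compL v a b g k) * r ^+ k <= M.
Proof.
move=> gM k; have rk_gt0 : 0 < r ^+ k by apply: exprn_gt0.
have M_ge0 : 0 <= M by apply: le_trans (gM 0%N); rewrite mulr_ge0 ?absv_ge0.
rewrite -ler_pdivlMr //; apply: absv_Ksum_le => [|n]; first by rewrite divr_ge0 // ltW.
by rewrite ler_pdivlMr //; apply: le_trans (compL_term_weight_le _ _ _) _.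
Qed.

Lemma DeltaL_weight_le (g : nat -> K) M : (forall n, v (g n) * r ^+ n <= M) ->
  forall k, v (DeltaL v a b g k) * r ^+ k <= M.
Proof.
move=> gM k; have rk_gt0 : 0 < r ^+ k by apply: exprn_gt0.
rewrite -ler_pdivlMr //; apply: le_trans (absvD_le_max _ _) _.
by rewrite absvN ge_max !ler_pdivlMr // gM compL_weight_le.
Qed.

Lemma DeltaLn_weight_le m (g : nat -> K) M : (forall n, v (g n) * r ^+ n <= M) ->
  forall k, v (DeltaLn v a b m g k) * r ^+ k <= M.
Proof. by move=> gM; elim: m => [|m IH] //=; apply: DeltaL_weight_le. Qed.

End ShiftedCoefficients.

Section MaximumTerm.
Context {r : R} {f : nat -> K}.
Hypotheses (r_gt0 : 0 < r) (f_entire : entire v f).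

Lemma mu_ge n : v (f n) * r ^+ n <= mu v r f.
Proof.
apply: ub_le_sup; last by exists n.
exact/bounded_fun_has_ubound/cvg_seq_bounded/(cvgP 0)/f_entire.
Qed.

Lemma mu_gt0 : (exists n, f n != 0) -> 0 < mu v r f.
Proof.
by move=> [n fn0]; apply: lt_le_trans (mu_ge n); rewrite mulr_gt0 ?absv_gt0 ?exprn_gt0.
Qed.

Lemma mlog_eq0 (g : nat -> K) : (exists n, f n != 0) ->
  (forall k, v (g k) * r ^+ k <= mu v r f) -> mlog v r g f = 0.
Proof.
move=> f_neq0 gmu; apply/max_idPl/ln_le0.
rewrite ler_pdivrMr ?mul1r; last exact: mu_gt0.
by apply: ge_sup; [exists (v (g 0%N) * r ^+ 0), 0%N | move=> _ [k _ <-]].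
Qed.

End MaximumTerm.
End NonArchimedeanAbs.

Theorem corollary2p2 (R : realType) (K : closedFieldType) (v : K -> R) :
  [pchar K] =i pred0 ->
  is_nonarch_abs v -> nontrivial_abs v -> complete_abs v ->
  forall (a b : K), a != 0 -> v a <= 1 ->
  forall f : nat -> K, entire v f -> (exists n, f n != 0) ->
  forall m : nat, (0 < m)%N ->
  forall r : R, v b / v a < r ->
    mlog v r (compL v a b f) f = 0 /\ mlog v r (DeltaLn v a b m f) f = 0.
Proof.
move=> _ hv _ _ a b a0 va_le1 f f_entire f_neq0 m _ r br.
have va_gt0 : 0 < v a by rewrite absv_gt0.
have vb_le_r : v b <= r.
  by apply: le_trans (ltW br); rewrite ler_pdivlMr // ler_piMr ?absv_ge0.
have r_gt0 : 0 < r by apply: le_lt_trans br; rewrite divr_ge0 ?absv_ge0.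
have f_le_mu := mu_ge r_gt0 f_entire.
split; apply: (mlog_eq0 hv r_gt0 f_entire _ f_neq0).
  exact: (compL_weight_le hv va_le1 vb_le_r r_gt0 _ _ f_le_mu).
exact: (DeltaLn_weight_le hv va_le1 vb_le_r r_gt0 _ _ _ f_le_mu).
Qed.
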